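(* Let $P\in\mathbb{R}_+^{n\times n}$ be sub-stochastic, $w\in\mathbb{R}^n_+$, and $c\in\mathbb{R}^n$, and let $\mathcal X=\{x\in\mathbb{R}^n:\,x=S_0^w(P'x+c)\}$ be the set of equilibria. Let $x(t)$ be the sequence defined by $x(t+1)=S_0^w(P'x(t)+c)$, $t\ge0$, with $x(0)=x_0$. Then: (i) $\mathcal X$ admits a minimal element $\underline x$ and a maximal element $\overline x$ (with respect to the entrywise order on $\mathbb{R}^n$); (ii) if $x_0=0$, then $x(t)\to\underline x$ as $t\to+\infty$; (iii) if $x_0=w$, then $x(t)\to\overline x$ as $t\to+\infty$; (iv) writing $\underline x(c)$ and $\overline x(c)$ for the minimal and maximal equilibria as functions of $c$ (with $P,w$ fixed), the maps $c\mapsto\underline x(c)$ and $c\mapsto\overline x(c)$ are monotone nondecreasing from $\mathbb{R}^n$ to $\mathcal L_0^w=\{x:\,0\le x\le w\}$.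
   Context: A nonnegative matrix $P\in\mathbb{R}_+^{n\times n}$ is sub-stochastic if $P\mathbbm{1}\le\mathbbm{1}$ (this includes stochastic matrices, $P\mathbbm{1}=\mathbbm{1}$). For $w\in\mathbb{R}^n_+$, $(S_0^w(x))_i=\min\{\max\{x_i,0\},w_i\}$. $P'$ is the transpose of $P$. Vectors are ordered entrywise. *)

From HB Require Import structures.
From mathcomp Require Import all_boot all_order all_algebra.
From mathcomp Require Import all_classical all_reals all_analysis.
Set Implicit Arguments. Unset Strict Implicit. Unset Printing Implicit Defensive.
Import Order.TTheory GRing.Theory Num.Theory.
Local Open Scope ring_scope.
Local Open Scope classical_set_scope.

Definition lev (R : realType) (n : nat) (x y : 'cV[R]_n) : Prop :=
  forall i, x i 0 <= y i 0.

Definition substochastic (R : realType) (n : nat) (P : 'M[R]_n) : Prop :=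
  (forall i j, 0 <= P i j) /\ (forall i, \sum_(j < n) P i j <= 1).

Definition sat0 (R : realType) (n : nat) (w x : 'cV[R]_n) : 'cV[R]_n :=
  \col_i Num.min (Num.max (x i 0) 0) (w i 0).

Definition step (R : realType) (n : nat) (P : 'M[R]_n) (w c x : 'cV[R]_n) :=
  sat0 w (P^T *m x + c).

Definition equilibria (R : realType) (n : nat) (P : 'M[R]_n) (w c : 'cV[R]_n)
  : set 'cV[R]_n := [set x | x = step P w c x].

Definition traj (R : realType) (n : nat) (P : 'M[R]_n) (w c x0 : 'cV[R]_n)
  (t : nat) : 'cV[R]_n := iter t (step P w c) x0.

Definition is_least_elt (R : realType) (n : nat) (X : set 'cV[R]_n) (x : 'cV[R]_n) :=
  X x /\ forall y, X y -> lev x y.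
Definition is_greatest_elt (R : realType) (n : nat) (X : set 'cV[R]_n) (x : 'cV[R]_n) :=
  X x /\ forall y, X y -> lev y x.

Definition box0 (R : realType) (n : nat) (w : 'cV[R]_n) : set 'cV[R]_n :=
  [set x | lev 0 x /\ lev x w].

From HB Require Import structures.
From mathcomp Require Import all_boot all_order all_algebra.
From mathcomp Require Import all_classical all_reals all_analysis.
Import Order.TTheory GRing.Theory Num.Theory.
Import numFieldTopology.Exports numFieldNormedType.Exports.
Local Open Scope ring_scope.
Local Open Scope classical_set_scope.
Set Implicit Arguments. Unset Strict Implicit.

(* The map x |-> S_0^w(P'x + c) is monotone in x and c (as P >= 0), continuous,
   and sends every vector into the box [0, w].  Hence its iterates from 0
   increase and those from w decrease; their limits are fixed points, and
   comparing the iterates with an arbitrary equilibrium shows that they are the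
   least and the greatest one.  An equilibrium for c2 >= c1 is a post-fixed
   point of the map for c1, which gives monotonicity in c. *)

Section EntrywiseConvergence.
Variables (K : numFieldType) (m p : nat) (T : Type) (F : set_system T).
Context {FF : Filter F}.

Lemma cvg_mxP (u : T -> 'M[K]_(m, p)) (L : 'M[K]_(m, p)) :
  u @ F --> L <-> forall i j, (fun x => u x i j) @ F --> L i j.
Proof.
split=> [uL i j|uL].
  exact: (continuous_cvg _ (@coord_continuous K m p i j L) uL).
apply/cvg_mx_entourageP => A entA.
apply: filter_forall => i; apply: filter_forall => j.
have /cvg_app_entourageP/(_ A entA) := uL i j.
by apply: filterS => x /= Ax; rewrite inE.
Qed.

End EntrywiseConvergence.

Section EntrywiseOrder.
Variables (R : realType) (n : nat).
Implicit Types (x y : 'cV[R]_n) (u : nat -> 'cV[R]_n).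

Lemma lev_trans y x z : lev x y -> lev y z -> lev x z.
Proof. by move=> xy yz i; apply: le_trans (xy i) (yz i). Qed.

Lemma cvgn_mx u : (forall i, cvgn (fun t => u t i 0)) -> cvgn u.
Proof.
move=> uc; apply/cvg_ex; exists (\col_i limn (fun t => u t i 0)).
by apply/cvg_mxP => i j; rewrite ord1 mxE; apply: uc.
Qed.

Lemma cvgn_entry u i : cvgn u -> (fun t => u t i 0) @ \oo --> limn u i 0.
Proof. by move=> /cvg_mxP; apply. Qed.

Lemma limn_mxE u i : cvgn u -> limn u i 0 = limn (fun t => u t i 0).
Proof. by move=> uc; rewrite (cvg_lim _ (cvgn_entry uc)). Qed.

Lemma nondecreasing_lev_cvgn u y :
  (forall t, lev (u t) (u t.+1)) -> (forall t, lev (u t) y) -> cvgn u.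
Proof.
move=> uS uy; apply: cvgn_mx => i; apply: nondecreasing_is_cvgn.
  by apply/nondecreasing_seqP => t; apply: uS.
by exists (y i 0) => _ [t _ <-]; apply: uy.
Qed.

Lemma nonincreasing_lev_cvgn u y :
  (forall t, lev (u t.+1) (u t)) -> (forall t, lev y (u t)) -> cvgn u.
Proof.
move=> uS yu; apply: cvgn_mx => i; apply: nonincreasing_is_cvgn.
  by apply/nonincreasing_seqP => t; apply: uS.
by exists (y i 0) => _ [t _ <-]; apply: yu.
Qed.

Lemma limn_lev u y : cvgn u -> (forall t, lev (u t) y) -> lev (limn u) y.
Proof.
move=> uc uy i; rewrite limn_mxE //; apply: limr_le.
  exact: cvgP (cvgn_entry uc).
by apply: nearW => t; apply: uy.
Qed.

Lemma lev_limn u y : cvgn u -> (forall t, lev y (u t)) -> lev y (limn u).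
Proof.
move=> uc yu i; rewrite limn_mxE //; apply: limr_ge.
  exact: cvgP (cvgn_entry uc).
by apply: nearW => t; apply: yu.
Qed.

End EntrywiseOrder.

Section MonotoneIteration.
Variables (R : realType) (n : nat) (f : 'cV[R]_n -> 'cV[R]_n).
Hypothesis f_mono : forall x y, lev x y -> lev (f x) (f y).

Lemma iter_lev t x y : lev x y -> lev (iter t f x) (iter t f y).
Proof. by move=> xy; elim: t => //= t; apply: f_mono. Qed.

Lemma iter_lev_postfixed t a y : lev a y -> lev (f y) y -> lev (iter t f a) y.
Proof.
by move=> ay fy; elim: t => //= t IH; apply: lev_trans fy; apply: f_mono.
Qed.

Lemma iter_lev_prefixed t b y : lev y b -> lev y (f y) -> lev y (iter t f b).
Proof.
by move=> yb fy; elim: t => //= t IH; apply: lev_trans fy _; apply: f_mono.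
Qed.

Lemma iter_nondecreasing t a : lev a (f a) -> lev (iter t f a) (iter t.+1 f a).
Proof. by move=> afa; rewrite iterSr; apply: iter_lev. Qed.

Lemma iter_nonincreasing t b : lev (f b) b -> lev (iter t.+1 f b) (iter t f b).
Proof. by move=> fbb; rewrite iterSr; apply: iter_lev. Qed.

Lemma limn_iter_fixed (f_cont : continuous f) x :
  cvgn (fun t => iter t f x) ->
  f (limn (fun t => iter t f x)) = limn (fun t => iter t f x).
Proof.
move=> xc; set L := limn _.
have fL : (fun t => iter t.+1 f x) @ \oo --> f L.
  exact: (continuous_cvg _ (f_cont L) xc).
rewrite -(cvg_lim (@norm_hausdorff _ _) fL).
apply: (cvg_lim (@norm_hausdorff _ _)).
by rewrite (cvg_shiftS (fun t => iter t f x)).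
Qed.

Variables (a b : 'cV[R]_n).
Hypotheses (ab : lev a b) (fa : lev a (f a)) (fb : lev (f b) b).

Lemma cvgn_iter_bottom : cvgn (fun t => iter t f a).
Proof.
apply: (@nondecreasing_lev_cvgn _ _ _ b) => t; first exact: iter_nondecreasing.
exact: iter_lev_postfixed.
Qed.

Lemma cvgn_iter_top : cvgn (fun t => iter t f b).
Proof.
apply: (@nonincreasing_lev_cvgn _ _ _ a) => t; first exact: iter_nonincreasing.
exact: iter_lev_prefixed.
Qed.

Lemma limn_iter_bottom_least y :
  lev a y -> lev (f y) y -> lev (limn (fun t => iter t f a)) y.
Proof.
by move=> ay fy; apply: limn_lev cvgn_iter_bottom _ => t; apply: iter_lev_postfixed.
Qed.

Lemma limn_iter_top_greatest y :
  lev y b -> lev y (f y) -> lev y (limn (fun t => iter t f b)).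
Proof.
by move=> yb fy; apply: lev_limn cvgn_iter_top _ => t; apply: iter_lev_prefixed.
Qed.

End MonotoneIteration.

Section SaturatedDynamics.
Variables (R : realType) (n : nat) (P : 'M[R]_n) (w : 'cV[R]_n).

Lemma stepE c x i :
  step P w c x i 0 = Num.min (Num.max (\sum_j P j i * x j 0 + c i 0) 0) (w i 0).
Proof. by rewrite !mxE; under eq_bigr do rewrite mxE. Qed.

Lemma step_continuous c : continuous (step P w c).
Proof.
move=> x; apply/(@cvg_mxP _ _ _ _ (nbhs x)) => i j.
rewrite ord1 stepE; under eq_fun do rewrite stepE.
apply: (continuous2_cvg _ (h := Num.min)); last exact: cvg_cst.
  exact: (@min_continuous _ R^o (_, _)).
apply: (continuous2_cvg _ (h := Num.max)); last exact: cvg_cst.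
  exact: (@max_continuous _ R^o (_, _)).
apply: cvgD; last exact: cvg_cst.
apply: cvg_big => //; first exact: add_continuous.
by move=> k _; apply: cvgM; [exact: cvg_cst | exact: coord_continuous].
Qed.

Hypothesis w_ge0 : lev 0 w.

Lemma step_box c x : box0 w (step P w c x).
Proof.
split=> i; rewrite stepE; last by rewrite ge_min lexx orbT.
by rewrite mxE le_min le_max lexx orbT; have := w_ge0 i; rewrite mxE.
Qed.

Lemma equilibria_box c x : equilibria P w c x -> box0 w x.
Proof. by move=> ->; apply: step_box. Qed.

Hypothesis P_ge0 : forall i j, 0 <= P i j.

Lemma step_mono c1 c2 x y :
  lev c1 c2 -> lev x y -> lev (step P w c1 x) (step P w c2 y).
Proof.
move=> c12 xy i; rewrite !stepE; apply: le_min2 => //; apply: le_max2 => //.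
by apply: lerD => //; apply: ler_sum => j _; apply: ler_wpM2l.
Qed.

Definition min_equilibrium c := limn (traj P w c 0).
Definition max_equilibrium c := limn (traj P w c w).

Let step_monotone c : forall x y, lev x y -> lev (step P w c x) (step P w c y).
Proof. by move=> x y; apply: step_mono. Qed.
Let step0 c : lev 0 (step P w c 0). Proof. by case: (step_box c 0). Qed.
Let stepw c : lev (step P w c w) w. Proof. by case: (step_box c w). Qed.

Lemma traj_cvg_min_equilibrium c : traj P w c 0 @ \oo --> min_equilibrium c.
Proof. exact: (cvgn_iter_bottom (step_monotone c) w_ge0 (step0 c) (stepw c)). Qed.

Lemma traj_cvg_max_equilibrium c : traj P w c w @ \oo --> max_equilibrium c.
Proof. exact: (cvgn_iter_top (step_monotone c) w_ge0 (step0 c) (stepw c)). Qed.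

Lemma min_equilibrium_fixed c : equilibria P w c (min_equilibrium c).
Proof. exact/esym/limn_iter_fixed/traj_cvg_min_equilibrium/step_continuous. Qed.

Lemma max_equilibrium_fixed c : equilibria P w c (max_equilibrium c).
Proof. exact/esym/limn_iter_fixed/traj_cvg_max_equilibrium/step_continuous. Qed.

Lemma min_equilibrium_le c1 c2 y :
  lev c1 c2 -> equilibria P w c2 y -> lev (min_equilibrium c1) y.
Proof.
move=> c12 yeq; have [y_ge0 _] := equilibria_box yeq.
apply: (limn_iter_bottom_least (step_monotone c1) w_ge0 (step0 c1) (stepw c1)) => //.
by rewrite [X in lev _ X]yeq; apply: step_mono.
Qed.

Lemma max_equilibrium_ge c1 c2 y :
  lev c1 c2 -> equilibria P w c1 y -> lev y (max_equilibrium c2).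
Proof.
move=> c12 yeq; have [_ y_lew] := equilibria_box yeq.
apply: (limn_iter_top_greatest (step_monotone c2) w_ge0 (step0 c2) (stepw c2)) => //.
by rewrite [X in lev X _]yeq; apply: step_mono.
Qed.

End SaturatedDynamics.

Theorem proposition1 (R : realType) (n : nat) (P : 'M[R]_n) (w : 'cV[R]_n) :
  substochastic P -> lev 0 w ->
  exists xlo xhi : 'cV[R]_n -> 'cV[R]_n,
    (* (i) *)
    (forall c, is_least_elt (equilibria P w c) (xlo c) /\
               is_greatest_elt (equilibria P w c) (xhi c)) /\
    (* (ii) *)
    (forall c, traj P w c 0 @ \oo --> xlo c) /\
    (* (iii) *)
    (forall c, traj P w c w @ \oo --> xhi c) /\
    (* (iv) *)
    (forall c, box0 w (xlo c) /\ box0 w (xhi c)) /\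
    (forall c1 c2, lev c1 c2 -> lev (xlo c1) (xlo c2) /\ lev (xhi c1) (xhi c2)).
Proof.
move=> [P_ge0 _] w_ge0.
exists (min_equilibrium P w), (max_equilibrium P w).
split; [|split; [|split; [|split]]] => [c|c|c|c|c1 c2 c12].
- split; split.
  + exact: min_equilibrium_fixed.
  + by move=> y; apply: min_equilibrium_le.
  + exact: max_equilibrium_fixed.
  + by move=> y; apply: max_equilibrium_ge.
- exact: traj_cvg_min_equilibrium.
- exact: traj_cvg_max_equilibrium.
- split; apply: equilibria_box => //.
    exact: min_equilibrium_fixed.
  exact: max_equilibrium_fixed.
- split; first exact/min_equilibrium_le/min_equilibrium_fixed.
  exact/max_equilibrium_ge/max_equilibrium_fixed.
Qed.
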